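(* Let $g\in\mathbb{F}_q[t]$ be a composite polynomial. Then $g$ is a Carmichael polynomial if and only if (1) $g$ is square-free, and (2) $\deg P$ divides $\deg g$ for every irreducible factor $P$ of $g$.
   Context: $\mathbb{F}_q$ is the finite field with $q$ elements. A composite polynomial is a nonzero, non-constant polynomial that is not irreducible. A finite ring $S$ is a Carmichael ring if $S$ is not a field and $a^{|S|}=a$ for every $a\in S$. A polynomial $g\in\mathbb{F}_q[t]$ is a Carmichael polynomial if $\mathbb{F}_q[t]/(g)$ is a Carmichael ring. *)

From HB Require Import structures.
From mathcomp Require Import all_boot all_order all_algebra all_field.
Set Implicit Arguments. Unset Strict Implicit. Unset Printing Implicit Defensive.
Import GRing.Theory.
Local Open Scope ring_scope.

Definition carmichael_ring (S : finComUnitRingType) : Prop :=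
  ~ (forall a : S, a != 0 -> a \is a GRing.unit) /\
  (forall a : S, a ^+ #|S| = a).

(* Monic associate of g; the ideal (g) equals the ideal (monic_assoc g) for g != 0. *)
Definition monic_assoc (F : fieldType) (g : {poly F}) : {poly F} :=
  (lead_coef g)^-1 *: g.

(* g is Carmichael iff F[t]/(g) is a Carmichael ring.  MathComp's quotient
   ring {poly %/ h} is R[t]/(h) for monic h of size > 1. *)
Definition carmichael_poly (F : finFieldType) (g : {poly F}) : Prop :=
  carmichael_ring [the finComUnitRingType of {poly %/ monic_assoc g}].

Definition composite_poly (F : fieldType) (g : {poly F}) : Prop :=
  g != 0 /\ (1 < size g)%N /\ ~ irreducible_poly g.

Definition squarefree_poly (F : fieldType) (g : {poly F}) : Prop :=
  forall p : {poly F}, p ^+ 2 %| g -> (size p <= 1)%N.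

From HB Require Import structures.
From mathcomp Require Import all_boot all_order all_algebra all_field.
From Stdlib Require Import Classical.
Set Implicit Arguments. Unset Strict Implicit. Unset Printing Implicit Defensive.
Import GRing.Theory.
Local Open Scope ring_scope.

(* Let [n = deg g] and [Q = F[t]/(g)], so [|Q| = q^n].  A composite [g] has a
   proper factor, which is a nonzero non-unit of [Q]; hence [g] is Carmichael
   iff [g] divides [f^(q^n) - f] for every [f].  For an irreducible [P] of
   degree [d], [F[t]/(P)] is the field with [q^d] elements, and every element
   satisfies [y^(q^n) = y] iff [d | n]: if [d | n] this is Fermat, and
   otherwise [t^(q^r) - t], with [0 < r = n mod d < d], would have [q^d] roots.
   So [P | f^(q^n) - f] for all [f] iff [d | n].  It remains that [g] divides
   [f^(q^n) - f] for all [f] iff all its irreducible factors do and [g] is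
   square-free: if [p^2 | g] then [a = g/p] satisfies [g | a^2 | a^(q^n)],
   hence [g | a], which is impossible by degree. *)

Section Factors.
Variable F : fieldType.
Implicit Types g u D : {poly F}.

Lemma exists_proper_divisor u : (1 < size u)%N -> ~ irreducible_poly u ->
  exists2 q : {poly F}, (1 < size q < size u)%N & q %| u.
Proof.
move=> su uNirr; apply: NNPP => noDiv; apply: uNirr; split=> // q sq1 qu.
have u0 : u != 0 by rewrite -size_poly_gt0 ltnW.
have q0 : q != 0 by apply: contraTneq qu => ->; rewrite dvd0p.
rewrite -(dvdp_size_eqp qu) eqn_leq (dvdp_leq u0 qu) leqNgt /=.
apply/negP => squ; apply: noDiv; exists q => //.
by rewrite squ andbT ltn_neqAle eq_sym sq1 size_poly_gt0.
Qed.

Lemma exists_irreducible_dvdp u : (1 < size u)%N ->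
  exists2 P : {poly F}, irreducible_poly P & P %| u.
Proof.
elim: {u}(size u).+1 {-2}u (ltnSn (size u)) => // k IHk u su_k su.
have [irr_u | uNirr] := classic (irreducible_poly u); first by exists u.
have [q /andP[sq1 squ] qu] := exists_proper_divisor su uNirr.
have [P irrP Pq] := IHk q (leq_trans squ su_k) sq1.
by exists P => //; apply: dvdp_trans qu.
Qed.

Lemma squarefree_dvdp g D : g != 0 -> squarefree_poly g ->
  (forall P, irreducible_poly P -> P %| g -> P %| D) -> g %| D.
Proof.
move=> g0 sqf_g dvdD; suff: forall u, u %| g -> u %| D by apply; apply: dvdpp.
move=> u; elim: {u}(size u).+1 {-2}u (ltnSn (size u)) => // k IHk u su_k ug.
have u0 : u != 0 by apply: contraTneq ug => ->; rewrite dvd0p.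
have [su1 | su] := leqP (size u) 1.
  have : size u == 1%N by rewrite eqn_leq su1 size_poly_gt0.
  by rewrite size_poly_eq1 => /eqp_dvdl->; rewrite dvd1p.
have [P irrP Pu] := exists_irreducible_dvdp su.
have uE : u = u %/ P * P by rewrite divpK.
have u'g : u %/ P %| g := dvdp_trans (divp_dvd Pu) ug.
have su' : (size (u %/ P)%R < size u)%N.
  rewrite size_divp ?irredp_neq0 // ltn_subrL (ltnW su) andbT -ltnS prednK.
    by case: irrP.
  by rewrite size_poly_gt0 irredp_neq0.
have P_coprime : coprimep P (u %/ P).
  rewrite irreducible_poly_coprime //; apply/negP => Pu'.
  have /sqf_g : P ^+ 2 %| g by apply: dvdp_trans ug; rewrite uE expr2 dvdp_mul.
  by rewrite leqNgt; case: irrP => ->.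
rewrite uE mulrC Gauss_dvdp // dvdD ?(dvdp_trans Pu ug) //=.
by rewrite IHk // (leq_trans su').
Qed.

Lemma squarefree_of_dvdp_exp_sub g N : g != 0 -> (1 < N)%N ->
  (forall f, g %| f ^+ N - f) -> squarefree_poly g.
Proof.
move=> g0 N_gt1 gdvd p /dvdpP[c gE]; rewrite leqNgt; apply/negP => sp.
pose a := c * p.
have ga : g = a * p by rewrite gE /a expr2 mulrA.
have a0 : a != 0 by apply: contraNneq g0; rewrite ga => ->; rewrite mul0r.
have g_a2 : g %| a ^+ 2 by rewrite gE /a exprMn [c ^+ 2]expr2 -mulrA dvdp_mulIr.
have g_a : g %| a by rewrite -(dvdp_subr _ (dvdp_trans g_a2 (dvdp_exp2l _ N_gt1))).
have p0 : p != 0 by rewrite -size_poly_gt0 ltnW.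
have := dvdp_leq a0 g_a; rewrite ga size_mul //.
by case: (size p) sp => [|[|m]] //= _; rewrite !addnS /= leqNgt ltnS leq_addr.
Qed.

End Factors.

Section MonicAssoc.
Variable F : fieldType.
Implicit Type g : {poly F}.

Lemma monic_assoc_eqp g : g != 0 -> monic_assoc g %= g.
Proof. by move=> g0; rewrite eqp_scale // invr_eq0 lead_coef_eq0. Qed.

Lemma size_monic_assoc g : size (monic_assoc g) = size g.
Proof.
have [->|g0] := eqVneq g 0; first by rewrite /monic_assoc scaler0.
by rewrite size_scale // invr_eq0 lead_coef_eq0.
Qed.

Lemma monic_assoc_monic g : g != 0 -> monic_assoc g \is monic.
Proof. by move=> g0; rewrite monicE lead_coefZ mulVf ?lead_coef_eq0. Qed.

Lemma monic_irreducible_assoc g :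
  irreducible_poly g -> monic_irreducible_poly (monic_assoc g).
Proof.
move=> irr_g; have g0 := irredp_neq0 irr_g.
split; last exact: monic_assoc_monic.
split=> [|q sq1]; first by rewrite size_monic_assoc; case: irr_g.
rewrite !(eqp_dvdr _ (monic_assoc_eqp g0)) => qg.
by apply: eqp_trans (irr_g q sq1 qg) _; rewrite eqp_sym monic_assoc_eqp.
Qed.

End MonicAssoc.

Section Quotient.
Variables (F : fieldType) (h : {poly F}).
Hypotheses (h_monic : h \is monic) (sh : (1 < size h)%N).

Lemma mk_monic_id : mk_monic h = h.
Proof. by rewrite /mk_monic sh h_monic. Qed.

Lemma in_qpoly_eq0 f : (in_qpoly h f == 0) = (h %| f).
Proof.
by apply/eqP/idP => [/val_eqP | ?]; [|apply/val_eqP];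
  rewrite /= -Pdiv.IdomainMonic.modpE mk_monic_id.
Qed.

Lemma in_qpolyK (a : {poly %/ h}) : in_qpoly h (a : {poly F}) = a.
Proof. by apply: val_inj; apply: in_qpoly_small; apply: size_mk_monic. Qed.

Lemma qpoly_exp_idP N :
  (forall a : {poly %/ h}, a ^+ N = a) <-> (forall f, h %| f ^+ N - f).
Proof.
split=> [id_N f | dvd_N a].
  by rewrite -in_qpoly_eq0 rmorphB rmorphXn /= id_N subrr.
apply/eqP; rewrite -subr_eq0 -(in_qpolyK a) -rmorphXn -rmorphB.
by rewrite in_qpoly_eq0.
Qed.

Lemma qpoly_proper_divisor_not_unit (q : {poly F}) :
  (1 < size q < size h)%N -> q %| h ->
  exists2 a : {poly %/ h}, a != 0 & a \isn't a GRing.unit.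
Proof.
move=> /andP[sq1 sqh] qh.
have aE : in_qpoly h q = q :> {poly F} by rewrite in_qpoly_small // mk_monic_id.
exists (in_qpoly h q).
  rewrite in_qpoly_eq0; apply: contraTN sqh => /dvdp_leq; rewrite -leqNgt; apply.
  by rewrite -size_poly_gt0 ltnW.
apply/negP => /unitrP[b [bq _]].
have := qpoly_intro_unit bq; rewrite aE mk_monic_id => h_coprime.
have := coprimep_dvdr qh h_coprime.
by rewrite coprimepp eqn_leq leqNgt sq1.
Qed.

End Quotient.

Lemma expf_card_expn (K : finFieldType) (x : K) m : x ^+ (#|K| ^ m) = x.
Proof. by elim: m => [|m IHm]; rewrite ?expr1 // expnS exprM expf_card IHm. Qed.

Section IrreducibleQuotient.
Variables (F : finFieldType) (P : {poly F}) (hI : monic_irreducible_poly P).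
Local Notation L := {poly %/ P with hI}.

Lemma qfpoly_exp_card_expn_idP n :
  (forall y : L, y ^+ (#|F| ^ n) = y) <-> ((size P).-1 %| n)%N.
Proof.
split=> [id_n | /dvdnP[k ->] y]; last first.
  by rewrite mulnC expnM -(card_qfpoly hI) expf_card_expn.
have sP : (1 < size P)%N by case: hI => -[].
set d := (size P).-1; set r := (n %% d)%N.
have id_r (y : L) : y ^+ (#|F| ^ r) = y.
  rewrite -{2}(id_n y) (divn_eq n d) expnD exprM mulnC expnM.
  by rewrite -(card_qfpoly hI) expf_card_expn.
have [r0 | r_gt0] := posnP r; first exact/eqP.
have q1 : (1 < #|F|)%N := finNzRing_gt1 F.
(* [t^(q^r) - t] would have all [q^d] elements of [L] as roots *)
pose Q : {poly L} := 'X^(#|F| ^ r) - 'X.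
have qr_gt1 : (1 < #|F| ^ r)%N by rewrite -(expn0 #|F|) ltn_exp2l.
have sQ : size Q = (#|F| ^ r).+1.
  by rewrite size_polyDl ?size_polyXn // size_polyN size_polyX ltnS.
have Q0 : Q != 0 by rewrite -size_poly_gt0 sQ.
have rootsQ : all (root Q) (enum L).
  by apply/allP => y _; rewrite /root !hornerE id_r subrr.
have := max_poly_roots Q0 rootsQ (enum_uniq L).
rewrite sQ ltnS -cardE (card_qfpoly hI) leq_exp2l // -/d leqNgt.
by rewrite ltn_mod /d -subn1 subn_gt0 sP.
Qed.

End IrreducibleQuotient.

Lemma irreducible_dvdp_exp_card_subP (F : finFieldType) (P : {poly F}) n :
  irreducible_poly P ->
  (forall f, P %| f ^+ (#|F| ^ n) - f) <-> ((size P).-1 %| n)%N.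
Proof.
move=> irrP; have hI := monic_irreducible_assoc irrP.
have [[sP _] P_monic] := hI.
have Pe := monic_assoc_eqp (irredp_neq0 irrP).
rewrite -size_monic_assoc -(qfpoly_exp_card_expn_idP hI) (qpoly_exp_idP P_monic sP).
by split=> dvd_n f; [rewrite (eqp_dvdl _ Pe) | rewrite -(eqp_dvdl _ Pe)].
Qed.

Lemma dvdp_exp_card_subP (F : finFieldType) (g : {poly F}) n :
  g != 0 -> (0 < n)%N ->
  (forall f, g %| f ^+ (#|F| ^ n) - f) <->
  squarefree_poly g /\
  (forall P, irreducible_poly P -> P %| g -> ((size P).-1 %| n)%N).
Proof.
move=> g0 n_gt0; split=> [g_dvd | [sqf_g deg_dvd] f].
  split=> [|P irrP Pg].
    apply: squarefree_of_dvdp_exp_sub g_dvd => //.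
    by rewrite -(expn0 #|F|) ltn_exp2l ?finNzRing_gt1.
  by apply/(irreducible_dvdp_exp_card_subP n irrP) => f; apply: dvdp_trans (g_dvd f).
apply: squarefree_dvdp g0 sqf_g _ => P irrP Pg.
exact: (irreducible_dvdp_exp_card_subP n irrP).2 (deg_dvd P irrP Pg) f.
Qed.

Lemma carmichael_poly_dvdp (F : finFieldType) (g : {poly F}) :
  composite_poly g ->
  carmichael_poly g <-> (forall f, g %| f ^+ (#|F| ^ (size g).-1) - f).
Proof.
move=> [g0 [sg gNirr]].
have h_monic := monic_assoc_monic g0; have hg := monic_assoc_eqp g0.
have sh : (1 < size (monic_assoc g))%N by rewrite size_monic_assoc.
rewrite /carmichael_poly /carmichael_ring card_monic_qpoly // size_monic_assoc.
split=> [[_ /(qpoly_exp_idP h_monic sh) h_dvd] f | g_dvd].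
  by rewrite -(eqp_dvdl _ hg).
split; last by apply/(qpoly_exp_idP h_monic sh) => f; rewrite (eqp_dvdl _ hg).
have [q sq qg] := exists_proper_divisor sg gNirr.
have sq' : (1 < size q < size (monic_assoc g))%N by rewrite size_monic_assoc.
have qh : q %| monic_assoc g by rewrite (eqp_dvdr _ hg).
have [a a0 aNunit] := qpoly_proper_divisor_not_unit h_monic sh sq' qh.
by move=> /(_ a a0); apply/negP.
Qed.

Theorem theorem4p1 (F : finFieldType) (g : {poly F}) :
  composite_poly g ->
  (carmichael_poly g <->
     squarefree_poly g /\
     (forall P : {poly F}, irreducible_poly P -> P %| g ->
        ((size P).-1 %| (size g).-1)%N)).
Proof.
move=> g_composite; have [g0 [sg _]] := g_composite.
rewrite -dvdp_exp_card_subP //; last by rewrite -ltnS prednK // ltnW.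
exact: carmichael_poly_dvdp.
Qed.
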